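(* Let $d_1,d_2$ be positive integers. The set $U=\{F\in\Omega_2(d_1,d_2):\ J(F)\text{ is reduced and }\deg J(F)=d_1+d_2-2\}$ is an open subset of $\Omega_2(d_1,d_2)$.
   Context: $\Omega_2(d_1,d_2)$ is the set of polynomial mappings $F=(f,g):\mathbb{C}^2\to\mathbb{C}^2$ with $\deg f\le d_1$, $\deg g\le d_2$, identified with $\mathbb{C}^N$ via coefficients. $J(F)=f_xg_y-f_yg_x$; reduced means square-free as a polynomial. *)

From HB Require Import structures.
From mathcomp Require Import all_boot all_order all_algebra.
From mathcomp Require Import reals.
From mathcomp Require Import complex.
From mathcomp Require Import mpoly.

Set Implicit Arguments.
Unset Strict Implicit.
Unset Printing Implicit Defensive.

Import Order.TTheory GRing.Theory Num.Theory.
Local Open Scope ring_scope.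

Section Defs.
Variable C : fieldType.

Definition poly2 := {mpoly C[2]}.

Definition var_x : 'I_2 := ord0.
Definition var_y : 'I_2 := ord_max.

(* total degree bound: deg p <= d  (msize p = 1 + total degree, msize 0 = 0) *)
Definition deg_le (d : nat) (p : poly2) : Prop := (msize p <= d.+1)%N.

(* total degree equal to d (the zero polynomial has no degree) *)
Definition deg_eq (d : nat) (p : poly2) : Prop := msize p = d.+1.

Definition Omega2 (d1 d2 : nat) (F : poly2 * poly2) : Prop :=
  deg_le d1 F.1 /\ deg_le d2 F.2.

Definition jac (F : poly2 * poly2) : poly2 :=
  mderiv var_x F.1 * mderiv var_y F.2 - mderiv var_y F.1 * mderiv var_x F.2.

(* reduced = square-free: no nonconstant polynomial h with h^2 | p *)
Definition reduced (p : poly2) : Prop :=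
  forall h q : poly2, p = h * h * q -> (msize h <= 1)%N.
End Defs.

(* Openness in Omega_2(d1,d2) identified with C^N via coefficients
   (Euclidean topology; equivalently the sup-norm on coefficients). *)
Definition open_in_Omega2 (R : realType) (d1 d2 : nat)
    (U : poly2 R[i] * poly2 R[i] -> Prop) : Prop :=
  forall F, Omega2 d1 d2 F -> U F ->
    exists eps : R, 0 < eps /\
      forall G, Omega2 d1 d2 G ->
        (forall m : 'X_{1..2},
            `|G.1@_m - F.1@_m| < eps%:C /\ `|G.2@_m - F.2@_m| < eps%:C)%C ->
        U G.

From HB Require Import structures.
From mathcomp Require Import all_boot all_order all_algebra.
From mathcomp Require Import reals complex mpoly.
From mathcomp Require Import boolp classical_sets topology normedtype derive.
From mathcomp Require Import ring lra zify.
Import Order.TTheory GRing.Theory Num.Theory.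
Import numFieldNormedType.Exports.
Set Implicit Arguments.
Unset Strict Implicit.
Unset Printing Implicit Defensive.
Local Open Scope ring_scope.

(* The coefficients of J(F) depend continuously on those of F, so it suffices
   that the reduced polynomials of exact degree n = d1 + d2 - 2 contain a
   neighbourhood of each of their members among the polynomials of degree
   <= n, for the norm |p|^2 = sum of the squared moduli of the coefficients.
   A nearby r has a nonzero coefficient at the leading monomial of p, hence
   the same degree.
   If r = h^2 q with deg h = k >= 1, rescale h and q so that their largest
   coefficient is 1.  For fixed degrees and fixed positions of these
   coefficients, the normalized pairs form a compact box of real coordinates
   on which |h^2 q| is bounded below; this bounds the scalar lam in
   r = lam h^2 q.  Then (h, lam q) ranges over a compact box on which
   h^2 (lam q) - p never vanishes, since p is reduced of degree n, so |r - p|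
   is bounded below: r cannot be too close to p. *)

Section ComplexContinuity.
Variables (R : realType) (T : topologicalType).
Local Notation Re := (@complex.Re R).
Local Notation Im := (@complex.Im R).

Lemma complex_ReM (x y : R[i]) : Re (x * y) = Re x * Re y - Im x * Im y.
Proof. by case: x => a b; case: y. Qed.

Lemma complex_ImM (x y : R[i]) : Im (x * y) = Re x * Im y + Im x * Re y.
Proof. by case: x => a b; case: y. Qed.

Definition ccontinuous (f : T -> R[i]) :=
  continuous (fun t => Re (f t)) /\ continuous (fun t => Im (f t)).

Lemma ccontinuous_cst (c : R[i]) : ccontinuous (fun=> c).
Proof. by split; apply: cst_continuous. Qed.

Lemma ccontinuousD f g :
  ccontinuous f -> ccontinuous g -> ccontinuous (fun t => f t + g t).
Proof.
move=> [fr fi] [gr gi]; split.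
- under eq_fun do rewrite (raddfD (@complex.Re R)).
  by move=> t; exact: (continuousD (fr t) (gr t)).
- under eq_fun do rewrite (raddfD (@complex.Im R)).
  by move=> t; exact: (continuousD (fi t) (gi t)).
Qed.

Lemma ccontinuousN f : ccontinuous f -> ccontinuous (fun t => - f t).
Proof.
move=> [fr fi]; split.
- under eq_fun do rewrite (raddfN (@complex.Re R)).
  by move=> t; exact: (continuousN (fr t)).
- under eq_fun do rewrite (raddfN (@complex.Im R)).
  by move=> t; exact: (continuousN (fi t)).
Qed.

Lemma ccontinuousM f g :
  ccontinuous f -> ccontinuous g -> ccontinuous (fun t => f t * g t).
Proof.
move=> [fr fi] [gr gi]; split.
- under eq_fun do rewrite complex_ReM; move=> t.
  exact: (continuousD (continuousM (fr t) (gr t))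
                      (continuousN (continuousM (fi t) (gi t)))).
- under eq_fun do rewrite complex_ImM; move=> t.
  exact: (continuousD (continuousM (fr t) (gi t)) (continuousM (fi t) (gr t))).
Qed.

Lemma ccontinuous_sum (I : Type) (r : seq I) (P : pred I) (F : I -> T -> R[i]) :
  (forall i, ccontinuous (F i)) ->
  ccontinuous (fun t => \sum_(i <- r | P i) F i t).
Proof.
move=> cF; elim: r => [|i r IH].
  by under eq_fun do rewrite big_nil; exact: ccontinuous_cst.
under eq_fun do rewrite big_cons.
by case: (P i) => //; apply: ccontinuousD.
Qed.

End ComplexContinuity.

Section CoefficientNorm.
Variable R : realType.
Local Notation Re := (@complex.Re R).
Local Notation Im := (@complex.Im R).
Local Notation P := {mpoly R[i][2]}.

Definition sqnormc (z : R[i]) : R := Re z ^+ 2 + Im z ^+ 2.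

Lemma sqnormc_ge0 z : 0 <= sqnormc z.
Proof. by rewrite addr_ge0 ?sqr_ge0. Qed.

Lemma sqnormc_gt0 z : (0 < sqnormc z) = (z != 0).
Proof.
case: z => a b; rewrite lt0r sqnormc_ge0 andbT /sqnormc /=.
by rewrite paddr_eq0 ?sqr_ge0 // !sqrf_eq0 eq_complex /= negb_and.
Qed.

Lemma sqnormc0 : sqnormc 0 = 0.
Proof. by rewrite /sqnormc expr0n addr0. Qed.

Lemma sqnormcN z : sqnormc (- z) = sqnormc z.
Proof. by case: z => a b; rewrite /sqnormc /= !sqrrN. Qed.

Lemma sqnormcM x y : sqnormc (x * y) = sqnormc x * sqnormc y.
Proof. by rewrite /sqnormc complex_ReM complex_ImM; ring. Qed.

Lemma sqnormc_le_sub x y : sqnormc x <= 2 * sqnormc (x - y) + 2 * sqnormc y.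
Proof.
case: x => a b; case: y => c d; rewrite /sqnormc /=.
have := sqr_ge0 (a - 2 * c); have := sqr_ge0 (b - 2 * d); rewrite !expr2; nra.
Qed.

Definition coef_sqnorm b (p : P) : R := \sum_(m : 'X_{1..2 < b}) sqnormc p@_m.

Lemma coef_sqnorm_ge0 b p : 0 <= coef_sqnorm b p.
Proof. by apply: sumr_ge0 => m _; exact: sqnormc_ge0. Qed.

Lemma sqnormc_le_coef_sqnorm b p m :
  (mdeg m < b)%N -> sqnormc p@_m <= coef_sqnorm b p.
Proof.
move=> mb; rewrite /coef_sqnorm (bigD1 (BMultinom mb)) //= lerDl.
by apply: sumr_ge0 => *; exact: sqnormc_ge0.
Qed.

Lemma coef_sqnorm0 b : coef_sqnorm b 0 = 0.
Proof. by apply: big1 => m _; rewrite mcoeff0 sqnormc0. Qed.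

Lemma coef_sqnorm_gt0 b p : (msize p <= b)%N -> (0 < coef_sqnorm b p) = (p != 0).
Proof.
move=> pb; apply/idP/idP => [|p0].
  by apply: contraTN => /eqP ->; rewrite coef_sqnorm0 ltxx.
have lead_lt : (mdeg (mlead p) < b)%N by rewrite -ltnS mlead_deg.
apply: lt_le_trans (sqnormc_le_coef_sqnorm p lead_lt).
by rewrite sqnormc_gt0 mleadc_eq0.
Qed.

Lemma coef_sqnormZ b c p : coef_sqnorm b (c *: p) = sqnormc c * coef_sqnorm b p.
Proof.
by rewrite /coef_sqnorm mulr_sumr; apply: eq_bigr => m _; rewrite mcoeffZ sqnormcM.
Qed.

Lemma coef_sqnorm_le_sub b p q :
  coef_sqnorm b p <= 2 * coef_sqnorm b (p - q) + 2 * coef_sqnorm b q.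
Proof.
rewrite /coef_sqnorm !mulr_sumr -big_split /=; apply: ler_sum => m _.
by rewrite mcoeffB; exact: sqnormc_le_sub.
Qed.

End CoefficientNorm.

Section PolyContinuity.
Variables (R : realType) (T : topologicalType).
Local Notation P := {mpoly R[i][2]}.

Definition pcontinuous (Phi : T -> P) := forall m, ccontinuous (fun t => (Phi t)@_m).

Lemma pcontinuous_cst p : pcontinuous (fun=> p).
Proof. by move=> m; exact: ccontinuous_cst. Qed.

Lemma pcontinuousB Phi Psi :
  pcontinuous Phi -> pcontinuous Psi -> pcontinuous (fun t => Phi t - Psi t).
Proof.
move=> cPhi cPsi m; under eq_fun do rewrite mcoeffB.
by apply: ccontinuousD => //; exact: ccontinuousN.
Qed.

Lemma pcontinuousM Phi Psi :
  pcontinuous Phi -> pcontinuous Psi -> pcontinuous (fun t => Phi t * Psi t).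
Proof.
move=> cPhi cPsi m; under eq_fun do rewrite mcoeffM.
by apply: ccontinuous_sum => i; exact: ccontinuousM.
Qed.

Lemma pcontinuous_mderiv i Phi :
  pcontinuous Phi -> pcontinuous (fun t => mderiv i (Phi t)).
Proof.
move=> cPhi m; under eq_fun do rewrite mcoeff_mderiv -mulr_natr.
by apply: ccontinuousM => //; exact: ccontinuous_cst.
Qed.

Lemma continuous_coef_sqnorm b Phi :
  pcontinuous Phi -> continuous (fun t => coef_sqnorm b (Phi t)).
Proof.
move=> cPhi t; rewrite /coef_sqnorm.
elim: (index_enum _) => [|m r IH].
  by under eq_fun do rewrite big_nil; exact: cst_continuous.
under eq_fun do rewrite big_cons.
apply: (continuousD _ IH).
have [cre cim] := cPhi m; rewrite /sqnormc.
exact: (continuousD (continuousM (cre t) (cre t)) (continuousM (cim t) (cim t))).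
Qed.

End PolyContinuity.

Section RealCoordinates.
Variable R : realType.
Local Notation Re := (@complex.Re R).
Local Notation Im := (@complex.Im R).
Local Notation P := {mpoly R[i][2]}.

Lemma msize_leP (p : P) k :
  (msize p <= k)%N <-> (forall m, (k <= mdeg m)%N -> p@_m = 0).
Proof.
split=> [pk m km|p0].
  by apply/eqP; rewrite mcoeff_eq0; apply: msize_mdeg_ge; exact: leq_trans km.
rewrite msizeE; apply/bigmax_leqP_seq => m mp _; rewrite ltnNge.
by apply: contraL mp => /p0 /eqP; rewrite mcoeff_eq0.
Qed.

Definition rcoef b (p : P) (i : 'X_{1..2 < b} * bool) : R :=
  if i.2 then Im p@_i.1 else Re p@_i.1.
Arguments rcoef b p i : clear implicits.

Definition poly_of_rcoef b (f : 'X_{1..2 < b} * bool -> R) : P :=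
  \sum_(m : 'X_{1..2 < b}) (f (m, false) +i* f (m, true))%C *: 'X_[m].
Arguments poly_of_rcoef b f : clear implicits.

Lemma mcoeff_poly_of_rcoef b f m : (poly_of_rcoef b f)@_m =
  if (insub m : option 'X_{1..2 < b}) is Some m' then
    (f (m', false) +i* f (m', true))%C
  else 0.
Proof.
rewrite raddf_sum /=; under eq_bigr do rewrite mcoeffZ mcoeffX.
case: insubP => [m' _ <-|m_out].
  rewrite (bigD1 m') //= eqxx mulr1 big1 ?addr0 // => m'' m''_neq.
  by rewrite val_eqE (negbTE m''_neq) mulr0.
rewrite big1 // => m' _; case: eqP => [m'_eq|]; last by rewrite mulr0.
by move: m_out; rewrite -m'_eq bmdeg.
Qed.

Lemma rcoef_poly_of_rcoef b f i : rcoef b (poly_of_rcoef b f) i = f i.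
Proof. by case: i => m []; rewrite /rcoef mcoeff_poly_of_rcoef valK. Qed.

Lemma poly_of_rcoefK b p : (msize p <= b)%N -> poly_of_rcoef b (rcoef b p) = p.
Proof.
move=> pb; apply/mpolyP => m; rewrite mcoeff_poly_of_rcoef.
case: insubP => [m' _ <-|m_out]; first by rewrite /rcoef /=; case: (p@_m').
by symmetry; move/msize_leP: pb; apply; rewrite leqNgt.
Qed.

Lemma msize_poly_of_rcoef b f : (msize (poly_of_rcoef b f) <= b)%N.
Proof.
apply/msize_leP => m bm; rewrite mcoeff_poly_of_rcoef.
by case: insubP => // m' _ m'_eq; move: (bmdeg m'); rewrite m'_eq ltnNge bm.
Qed.

Lemma pcontinuous_poly_of_rcoef (T : topologicalType) b
    (F : T -> 'X_{1..2 < b} * bool -> R) :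
  (forall i, continuous (fun t => F t i)) ->
  pcontinuous (fun t => poly_of_rcoef b (F t)).
Proof.
move=> cF m; under eq_fun do rewrite mcoeff_poly_of_rcoef.
by case: insub => [m'|]; [split; exact: cF | exact: ccontinuous_cst].
Qed.

Definition boxed b (s : 'X_{1..2 < b} * bool -> R * R) (p : P) :=
  (msize p <= b)%N /\ forall i, (s i).1 <= rcoef b p i <= (s i).2.

Lemma rcoef_dist b (p q : P) (i : 'X_{1..2 < b} * bool) d :
  (`|p@_i.1 - q@_i.1| < d%:C)%C -> `|rcoef b p i - rcoef b q i| < d.
Proof.
rewrite normc_def ltcR; apply: le_lt_trans; rewrite -sqrtr_sqr ler_wsqrtr //.
case: i => m [] /=.
- by rewrite -(raddfB (@complex.Im R)) lerDr sqr_ge0.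
- by rewrite -(raddfB (@complex.Re R)) lerDl sqr_ge0.
Qed.

End RealCoordinates.
Arguments rcoef {R} b p i.
Arguments poly_of_rcoef {R} b f.

Section Compactness.
Variable R : realType.
Local Notation P := {mpoly R[i][2]}.

Lemma continuous_box_lbound n (lo hi : 'I_n -> R) (f : 'rV[R]_n -> R) :
  continuous f ->
  (forall v : 'rV_n, (forall j, lo j <= v ord0 j <= hi j) -> 0 < f v) ->
  exists2 c, 0 < c &
    forall v : 'rV_n, (forall j, lo j <= v ord0 j <= hi j) -> c <= f v.
Proof.
move=> cf f_gt0.
pose A := [set v : 'rV[R]_n | forall j, `[lo j, hi j]%classic (v ord0 j)]%classic.
have AE v : A v <-> (forall j, lo j <= v ord0 j <= hi j).
  by split=> vA j; have := vA j; rewrite /= in_itv.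
have [[v0 Av0]|A0] := pselect (A !=set0)%classic; last first.
  by exists 1 => // v /AE Av; exfalso; apply: A0; exists v.
have A_compact : compact A.
  by apply: (@rV_compact _ n (fun j => `[lo j, hi j]%classic)) => j;
    exact: segment_compact.
have [vmin /set_mem Avmin vmin_min] :=
  compact_EVT_min (ex_intro _ v0 Av0) A_compact (continuous_subspaceT cf).
exists (f vmin); first by apply: f_gt0; apply/AE.
by move=> v /AE Av; apply: vmin_min; apply/mem_set.
Qed.

Lemma uniform_lbound (I : finType) (X : Type) (A : I -> X -> Prop) (f : X -> R) :
  (forall i, exists2 c, 0 < c & forall x, A i x -> c <= f x) ->
  exists2 c, 0 < c & forall i x, A i x -> c <= f x.
Proof.
move=> lb; have /choice [c Hc] :
    forall i, exists c, 0 < c /\ forall x, A i x -> c <= f x.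
  by move=> i; have [c ? ?] := lb i; exists c.
exists (\big[Num.min/1]_i c i); first by apply: lt_bigmin => // i _; case: (Hc i).
by move=> i x Aix; exact: le_trans (bigmin_le _ i c) ((Hc i).2 x Aix).
Qed.

Local Notation coords b := (bool * ('X_{1..2 < b} * bool))%type.

(* Pairs of polynomials with support in degree < b, as real row vectors. *)
Definition vpoly b (v : 'rV[R]_#|{: coords b}|) (s : bool) : P :=
  poly_of_rcoef b (fun i => v ord0 (enum_rank (s, i))).

Definition vec_of_polys b (h q : P) : 'rV[R]_#|{: coords b}| :=
  \row_j rcoef b (if (enum_val j).1 then q else h) (enum_val j).2.

Lemma vpolyK b h q s : (msize h <= b)%N -> (msize q <= b)%N ->
  vpoly (vec_of_polys b h q) s = if s then q else h.
Proof.
move=> hb qb; rewrite /vpoly.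
under eq_fun do rewrite mxE enum_rankK /=.
by case: s; exact: poly_of_rcoefK.
Qed.

Lemma pcontinuous_vpoly b s :
  pcontinuous (fun v : 'rV[R]_#|{: coords b}| => vpoly v s).
Proof. by apply: pcontinuous_poly_of_rcoef => i; exact: coord_continuous. Qed.

Definition coef_continuous (Phi : P -> P -> R) :=
  forall (T : topologicalType) (H Q : T -> P), pcontinuous H -> pcontinuous Q ->
  continuous (fun t => Phi (H t) (Q t)).

Lemma box_lbound b (sh sq : 'X_{1..2 < b} * bool -> R * R) Phi :
  coef_continuous Phi ->
  (forall h q, boxed sh h -> boxed sq q -> 0 < Phi h q) ->
  exists2 c, 0 < c & forall h q, boxed sh h -> boxed sq q -> c <= Phi h q.
Proof.
move=> cPhi Phi_gt0.
pose s (x : coords b) := if x.1 then sq x.2 else sh x.2.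
pose inbox (v : 'rV[R]_#|{: coords b}|) :=
  forall j, (s (enum_val j)).1 <= v ord0 j <= (s (enum_val j)).2.
have vpoly_boxed v (t : bool) :
    inbox v -> boxed (if t then sq else sh) (vpoly v t).
  move=> vb; split=> [|i]; first exact: msize_poly_of_rcoef.
  rewrite /vpoly rcoef_poly_of_rcoef.
  by have := vb (enum_rank (t, i)); rewrite enum_rankK; case: t.
have [c c_gt0 Hc] := continuous_box_lbound
  (cPhi _ _ _ (pcontinuous_vpoly b false) (pcontinuous_vpoly b true))
  (fun v vb => Phi_gt0 _ _ (vpoly_boxed v false vb) (vpoly_boxed v true vb)).
exists c => // h q [hb hbox] [qb qbox].
have := Hc (vec_of_polys b h q); rewrite !vpolyK //; apply=> j.
by rewrite mxE /s; case: (enum_val j) => [[] i] /=; [exact: qbox | exact: hbox].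
Qed.

Lemma coef_continuous_at b Phi (h0 q0 : P) e :
  coef_continuous Phi -> (msize h0 <= b)%N -> (msize q0 <= b)%N -> 0 < e ->
  exists2 d, 0 < d & forall h q, (msize h <= b)%N -> (msize q <= b)%N ->
    (forall m, `|h@_m - h0@_m| < d%:C /\ `|q@_m - q0@_m| < d%:C)%C ->
    `|Phi h q - Phi h0 q0| < e.
Proof.
move=> cPhi h0b q0b e_gt0.
have cf := cPhi _ _ _ (pcontinuous_vpoly b false) (pcontinuous_vpoly b true).
have /nbhs_ballP [d d_gt0 Hd] :=
  cf (vec_of_polys b h0 q0) _ (nbhsx_ballx _ _ e_gt0).
exists d => // h q hb qb close.
have hq_near : ball (vec_of_polys b h0 q0) d (vec_of_polys b h q).
  split=> // i j; rewrite (ord1 i) -ball_normE /= !mxE.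
  case: (enum_val j) => [[] k] /=; rewrite distrC; apply: rcoef_dist.
  - exact: (close _).2.
  - exact: (close _).1.
by have := Hd _ hq_near; rewrite /= !vpolyK // -ball_normE /= distrC.
Qed.

End Compactness.

Section Degree.
Variable R : realType.
Local Notation P := {mpoly R[i][2]}.

Lemma mdeg_lt_msize (p : P) m : p@_m != 0 -> (mdeg m < msize p)%N.
Proof. by rewrite mcoeff_eq0 negbK; exact: msize_mdeg_lt. Qed.

Lemma mcoeff_eq1_neq0 (p : P) m : p@_m = 1 -> p != 0.
Proof. by apply: contra_eq_neq => ->; rewrite mcoeff0 eq_sym oner_neq0. Qed.

Lemma msizeB_le (p q : P) : (msize (p - q) <= maxn (msize p) (msize q))%N.
Proof. by rewrite -(msizeN q) msizeD_le. Qed.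

Lemma msizeM_le_add (p q : P) a b :
  (msize p <= a.+1)%N -> (msize q <= b.+1)%N -> (msize (p * q) <= (a + b).+1)%N.
Proof.
have [->|p0] := eqVneq p 0; first by rewrite mul0r msize0.
have [->|q0] := eqVneq q 0; first by rewrite mulr0 msize0.
have p_gt0 : (0 < msize p)%N by rewrite lt0n msize_poly_eq0.
have q_gt0 : (0 < msize q)%N by rewrite lt0n msize_poly_eq0.
by rewrite msizeM //; move: p_gt0 q_gt0; move: (msize p) (msize q) => x y; lia.
Qed.

Lemma msize_mderiv_le i (p : P) a :
  (msize p <= a.+1)%N -> (msize (mderiv i p) <= a)%N.
Proof.
move/msize_leP => p0; apply/msize_leP => m am.
by rewrite mcoeff_mderiv p0 ?mul0rn // mdegD mdeg1; lia.
Qed.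

Lemma msize_sqr_mul_le (h q : P) k j : (msize h <= k.+1)%N -> (msize q <= j.+1)%N ->
  (msize (h * h * q) <= (k + k + j).+1)%N.
Proof. by move=> hk qj; apply: msizeM_le_add qj; exact: msizeM_le_add. Qed.

Lemma msize_sqr_mul (h q : P) k j :
  msize h = k.+1 -> msize q = j.+1 -> msize (h * h * q) = (k + k + j).+1.
Proof.
have nz (p : P) i : msize p = i.+1 -> p != 0 by rewrite -msize_poly_eq0 => ->.
move=> hk qj; have h0 := nz _ _ hk; have q0 := nz _ _ qj.
by rewrite msizeM ?mulf_neq0 // msizeM // hk qj; lia.
Qed.

Lemma sqr_mul_msize_split (h q : P) n :
  msize (h * h * q) = n.+1 -> (1 < msize h)%N -> exists k j,
    [/\ (0 < k)%N, (k + k + j <= n)%N, msize h = k.+1 & msize q = j.+1].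
Proof.
move=> hhq_sz h_gt1; have : h * h * q != 0 by rewrite -msize_poly_eq0 hhq_sz.
rewrite !mulf_eq0 !negb_or => /andP [/andP [h0 _] q0].
exists (msize h).-1, (msize q).-1.
have hk : msize h = (msize h).-1.+1 by rewrite prednK // ltnW.
have qj : msize q = (msize q).-1.+1 by rewrite prednK // lt0n msize_poly_eq0.
split=> //; first by rewrite -ltnS -hk.
by rewrite -ltnS -(msize_sqr_mul hk qj) hhq_sz.
Qed.

Lemma reduced_sqr_mul_msize (h q : P) :
  reduced (h * h * q) -> (msize (h * h * q) <= msize q)%N.
Proof.
move=> /(_ h q erefl) h1; have [->|q0] := eqVneq q 0; first by rewrite mulr0.
have q_gt0 : (0 < msize q)%N by rewrite lt0n msize_poly_eq0.
by apply: leq_trans (msize_sqr_mul_le (j := (msize q).-1) h1 _) _; rewrite prednK.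
Qed.

Lemma msize_eq_near (p r : P) : (msize r <= msize p)%N ->
  coef_sqnorm (msize p) (r - p) < sqnormc (mleadc p) -> msize r = msize p.
Proof.
move=> rp near; apply/eqP; rewrite eqn_leq rp /=.
have p0 : p != 0.
  by apply: contraTneq near => ->; rewrite mleadc0 sqnormc0 -leNgt coef_sqnorm_ge0.
have lead_lt : (mdeg (mlead p) < msize p)%N by rewrite -mlead_deg.
rewrite -mlead_deg //; apply: mdeg_lt_msize; apply: contraTneq near => r0.
rewrite -leNgt; apply: le_trans (sqnormc_le_coef_sqnorm _ lead_lt).
by rewrite mcoeffB r0 sub0r sqnormcN.
Qed.

End Degree.

Section Normalization.
Variable R : realType.
Local Notation P := {mpoly R[i][2]}.

Definition coef_bounded X (p : P) := forall m, sqnormc p@_m <= X.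

Definition normalized (p : P) := (exists m, p@_m = 1) /\ coef_bounded 1 p.

Lemma coef_boundedZ X c p :
  coef_bounded X p -> coef_bounded (sqnormc c * X) (c *: p).
Proof. by move=> pX m; rewrite mcoeffZ sqnormcM ler_wpM2l ?sqnormc_ge0. Qed.

Lemma coef_bounded_le X Y (p : P) : X <= Y -> coef_bounded X p -> coef_bounded Y p.
Proof. by move=> XY pX m; exact: le_trans (pX m) XY. Qed.

Lemma normalize (p : P) : p != 0 -> exists2 a, a != 0 & normalized (a^-1 *: p).
Proof.
move=> p0; have lead_lt : (mdeg (mlead p) < msize p)%N by rewrite -mlead_deg.
pose F (m : 'X_{1..2 < msize p}) := sqnormc p@_m.
case: (@arg_maxP _ _ _ (BMultinom lead_lt) predT F isT) => mx _ mx_max.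
have a0 : p@_mx != 0.
  rewrite -sqnormc_gt0; apply: lt_le_trans (mx_max (BMultinom lead_lt) isT).
  by rewrite /F /= sqnormc_gt0 mleadc_eq0.
have p_bounded : coef_bounded (sqnormc p@_mx) p.
  move=> m; have [m_lt|m_ge] := ltnP (mdeg m) (msize p).
    exact: (mx_max (BMultinom m_lt)).
  by move/msize_leP: (leqnn (msize p)) => ->; rewrite // sqnormc0 sqnormc_ge0.
exists p@_mx => //; split; first by exists mx; rewrite mcoeffZ mulVf.
have := coef_boundedZ (p@_mx)^-1 p_bounded.
by rewrite -sqnormcM mulVf // /sqnormc /= expr1n expr0n addr0.
Qed.

Lemma sqr_mul_normalize (h q : P) : h != 0 -> q != 0 ->
  exists h' q' lam, [/\ normalized h', normalized q', msize h' = msize h,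
    msize q' = msize q & h * h * q = lam *: (h' * h' * q')].
Proof.
move=> h0 q0; have [a a0 ha] := normalize h0; have [c c0 qc] := normalize q0.
exists (a^-1 *: h), (c^-1 *: q), (a * a * c).
split; rewrite ?msizeZ ?invr_eq0 //.
rewrite -[h * h * q]scale1r -(_ : a * a * c * (a^-1 * a^-1 * c^-1) = 1).
  by rewrite -!mul_mpolyC !mpolyCM; ring.
by rewrite mulrACA [a * a * _]mulrACA !mulfV ?mulr1.
Qed.

End Normalization.

Section Boxes.
Variable R : realType.
Local Notation P := {mpoly R[i][2]}.

Definition coef_box (b k : nat) (pin : option 'X_{1..2 < b}) (X : R)
    (i : 'X_{1..2 < b} * bool) : R * R :=
  if (k < mdeg i.1)%N then (0, 0)
  else if pin == Some i.1 then (if i.2 then (0, 0) else (1, 1))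
  else (- (1 + X), 1 + X).

Lemma boxed_msize b k (pin : option 'X_{1..2 < b}) X (p : P) :
  boxed (coef_box k pin X) p -> (msize p <= k.+1)%N.
Proof.
move=> [pb pbox]; apply/msize_leP => m km.
have [mb|bm] := ltnP (mdeg m) b; last by move/msize_leP: pb; apply.
have := pbox (BMultinom mb, false); have := pbox (BMultinom mb, true).
rewrite /coef_box /rcoef /= km /=.
by case: (p@_m) => x y /= /le_anti <- /le_anti <-.
Qed.

Lemma boxed_pin b k (m : 'X_{1..2 < b}) X (p : P) :
  boxed (coef_box k (Some m) X) p -> (mdeg m <= k)%N -> p@_m = 1.
Proof.
move=> [_ pbox] mk; have := pbox (m, false); have := pbox (m, true).
rewrite /coef_box /rcoef /= ltnNge mk eqxx /=.
by case: (p@_m) => x y /= /le_anti <- /le_anti <-.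
Qed.

Lemma sqr_le_itv (a X : R) : a ^+ 2 <= X -> - (1 + X) <= a <= 1 + X.
Proof. by move=> aX; apply/andP; split; nra. Qed.

Lemma coef_box_boxed b k (pin : option 'X_{1..2 < b}) X (p : P) :
  (k < b)%N -> (msize p <= k.+1)%N -> (forall m, pin = Some m -> p@_m = 1) ->
  coef_bounded X p -> boxed (coef_box k pin X) p.
Proof.
move=> kb pk pin1 pX; split=> [|[m s]]; first exact: leq_trans pk kb.
rewrite /coef_box /rcoef /=; case: ltnP => km.
  have -> : p@_m = 0 by move/msize_leP: pk; apply.
  by case: s; rewrite lexx.
case: eqP => [/pin1 ->|_]; first by case: s; rewrite /= lexx.
have := pX m; rewrite /sqnormc => pmX.
by case: s; apply: sqr_le_itv; apply: le_trans pmX; rewrite ?lerDl ?lerDr sqr_ge0.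
Qed.

Lemma normalized_boxed b k (p : P) : (k < b)%N -> (msize p <= k.+1)%N ->
  normalized p -> exists2 m : 'X_{1..2 < b}, (mdeg m <= k)%N &
    boxed (coef_box k (Some m) 1) p.
Proof.
move=> kb pk [[m pm] p1].
have mk : (mdeg m <= k)%N.
  by rewrite -ltnS (leq_trans _ pk) // mdeg_lt_msize // pm oner_neq0.
exists (BMultinom (leq_ltn_trans mk kb)) => //.
by apply: coef_box_boxed => // _ [<-].
Qed.

End Boxes.

Section ReducedNeighbourhood.
Variable R : realType.
Local Notation P := {mpoly R[i][2]}.

Lemma coef_continuous_sqr_mul_sub b (r : P) :
  coef_continuous (fun h q => coef_sqnorm b (h * h * q - r)).
Proof.
move=> T H Q cH cQ; apply: continuous_coef_sqnorm.
apply: pcontinuousB; last exact: pcontinuous_cst.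
by apply: pcontinuousM => //; exact: pcontinuousM.
Qed.

Lemma normalized_sqr_mul_lbound n : exists2 c, 0 < c &
  forall k j (h q : P), (k + k + j <= n)%N -> (msize h <= k.+1)%N ->
    (msize q <= j.+1)%N -> normalized h -> normalized q ->
    c <= coef_sqnorm n.+1 (h * h * q).
Proof.
pose A (i : 'I_n.+1 * 'I_n.+1 * 'X_{1..2 < n.+1} * 'X_{1..2 < n.+1}) (x : P * P) :=
  let: (k, j, mh, mq) := i in
  [/\ (k + k + j <= n)%N, (mdeg mh <= k)%N, (mdeg mq <= j)%N,
      boxed (coef_box k (Some mh) 1) x.1 & boxed (coef_box j (Some mq) 1) x.2].
suff [c c_gt0 Hc] : exists2 c, 0 < c &
    forall i x, A i x -> c <= coef_sqnorm n.+1 (x.1 * x.1 * x.2 - 0).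
  exists c => // k j h q kjn hk qj hn qn.
  have kN : (k < n.+1)%N by lia.
  have jN : (j < n.+1)%N by lia.
  have [mh mhk hb] := normalized_boxed kN hk hn.
  have [mq mqj qb] := normalized_boxed jN qj qn.
  by rewrite -[h * h * q]subr0; exact: (Hc (Ordinal kN, Ordinal jN, mh, mq) (h, q)).
apply: uniform_lbound => -[[[k j] mh] mq] /=.
case: (boolP [&& (k + k + j <= n)%N, (mdeg mh <= k)%N & (mdeg mq <= j)%N]);
  last by move=> bad; exists 1 => // x [kjn mhk mqj]; rewrite kjn mhk mqj in bad.
move=> /and3P [kjn mhk mqj].
have hhq_gt0 (h q : P) : boxed (coef_box k (Some mh) 1) h ->
    boxed (coef_box j (Some mq) 1) q -> 0 < coef_sqnorm n.+1 (h * h * q - 0).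
  move=> hb qb; have hqj := msize_sqr_mul_le (boxed_msize hb) (boxed_msize qb).
  rewrite subr0 coef_sqnorm_gt0; last by apply: leq_trans hqj _; rewrite ltnS.
  by rewrite !mulf_neq0 // ?(mcoeff_eq1_neq0 (boxed_pin hb mhk))
    ?(mcoeff_eq1_neq0 (boxed_pin qb mqj)).
have [c c_gt0 Hc] :=
  box_lbound (coef_continuous_sqr_mul_sub (b := n.+1) (r := 0)) hhq_gt0.
by exists c => // x [_ _ _ hb qb]; exact: Hc.
Qed.

Variables (n : nat) (p : P).
Hypotheses (p_sz : msize p = n.+1) (p_red : reduced p).

Lemma sqr_mul_sub_lbound X : exists2 c, 0 < c &
  forall k j (h q : P), (0 < k)%N -> (k + k + j <= n)%N -> (msize h <= k.+1)%N ->
    (msize q <= j.+1)%N -> coef_bounded X h -> coef_bounded X q ->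
    c <= coef_sqnorm n.+1 (h * h * q - p).
Proof.
pose A (i : 'I_n.+1 * 'I_n.+1) (x : P * P) := let: (k, j) := i in
  [/\ (0 < k)%N, (k + k + j <= n)%N,
      boxed (coef_box (b := n.+1) k None X) x.1 &
      boxed (coef_box (b := n.+1) j None X) x.2].
suff [c c_gt0 Hc] : exists2 c, 0 < c &
    forall i x, A i x -> c <= coef_sqnorm n.+1 (x.1 * x.1 * x.2 - p).
  exists c => // k j h q k_gt0 kjn hk qj hX qX.
  have kN : (k < n.+1)%N by lia.
  have jN : (j < n.+1)%N by lia.
  by apply: (Hc (Ordinal kN, Ordinal jN) (h, q)); split=> //; apply: coef_box_boxed.
apply: uniform_lbound => -[k j] /=.
case: (boolP ((0 < k) && (k + k + j <= n))%N);
  last by move=> bad; exists 1 => // x [k_gt0 kjn]; rewrite k_gt0 kjn in bad.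
move=> /andP [k_gt0 kjn].
have hhq_gt0 (h q : P) : boxed (coef_box (b := n.+1) k None X) h ->
    boxed (coef_box (b := n.+1) j None X) q -> 0 < coef_sqnorm n.+1 (h * h * q - p).
  move=> hb qb; have hqj := msize_sqr_mul_le (boxed_msize hb) (boxed_msize qb).
  rewrite coef_sqnorm_gt0 ?subr_eq0; last first.
    by apply: leq_trans (msizeB_le _ _) _; rewrite geq_max p_sz leqnn andbT;
      apply: leq_trans hqj _; rewrite ltnS.
  apply/eqP => p_eq; move: p_red; rewrite -p_eq => /reduced_sqr_mul_msize.
  by rewrite p_eq p_sz; move: (boxed_msize qb); lia.
have [c c_gt0 Hc] :=
  box_lbound (coef_continuous_sqr_mul_sub (b := n.+1) (r := p)) hhq_gt0.
by exists c => // x [_ _ hb qb]; exact: Hc.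
Qed.

Lemma reduced_msize_nbhs : exists2 e, 0 < e & forall r : P,
  (msize r <= n.+1)%N -> coef_sqnorm n.+1 (r - p) < e -> reduced r /\ msize r = n.+1.
Proof.
have [c1 c1_gt0 Hc1] := normalized_sqr_mul_lbound n.
(* |r|^2 <= 2 |r - p|^2 + 2 |p|^2 <= 2 + 2 |p|^2 and c1 |lam|^2 <= |r|^2. *)
pose Y := (2 + 2 * coef_sqnorm n.+1 p) / c1.
have Y_ge0 : 0 <= Y.
  by rewrite divr_ge0 ?(ltW c1_gt0) ?addr_ge0 ?mulr_ge0 ?coef_sqnorm_ge0.
have [c2 c2_gt0 Hc2] := sqr_mul_sub_lbound (1 + Y).
have p0 : p != 0 by rewrite -msize_poly_eq0 p_sz.
exists (Num.min 1 (Num.min (sqnormc (mleadc p)) c2)) => [|r r_sz].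
  by rewrite !lt_min ltr01 c2_gt0 sqnormc_gt0 mleadc_eq0 p0.
rewrite !lt_min => /and3P [near1 near_lead near2].
have r_deg : msize r = n.+1 by rewrite -p_sz; apply: msize_eq_near; rewrite p_sz.
split=> // h q r_eq; rewrite leqNgt; apply/negP => h_gt1.
move: r_deg; rewrite r_eq => /sqr_mul_msize_split /(_ h_gt1).
move=> [k [j [k_gt0 kjn hk qj]]].
have h0 : h != 0 by rewrite -msize_poly_eq0 hk.
have q0 : q != 0 by rewrite -msize_poly_eq0 qj.
have [h' [q' [lam [h'n q'n h'_sz q'_sz r_eqZ]]]] := sqr_mul_normalize h0 q0.
rewrite {}r_eqZ in r_eq; rewrite -{}h'_sz in hk; rewrite -{}q'_sz in qj.
have lam_le : sqnormc lam <= Y.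
  rewrite ler_pdivlMr //; apply: (@le_trans _ _ (coef_sqnorm n.+1 r)).
    rewrite r_eq coef_sqnormZ ler_wpM2l ?sqnormc_ge0 //.
    exact: Hc1 (eq_leq hk) (eq_leq qj) h'n q'n.
  apply: le_trans (coef_sqnorm_le_sub _ r p) _.
  by rewrite lerD2r -[2 in leRHS]mulr1 ler_wpM2l // ltW.
have c2_le : c2 <= coef_sqnorm n.+1 (r - p).
  rewrite r_eq scalerAr; apply: Hc2 kjn (eq_leq hk) _ _ _ => //.
  - exact: leq_trans (msizeZ_le _ _) (eq_leq qj).
  - by apply: coef_bounded_le h'n.2; rewrite lerDl.
  - apply: coef_bounded_le (coef_boundedZ lam q'n.2).
    by rewrite mulr1 (le_trans lam_le) // lerDr.
by move: near2; rewrite ltNge c2_le.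
Qed.

End ReducedNeighbourhood.

Section Jacobian.
Variable R : realType.
Local Notation P := {mpoly R[i][2]}.

Lemma msize_jac d1 d2 (F : P * P) : (0 < d1)%N -> (0 < d2)%N ->
  Omega2 d1 d2 F -> (msize (jac F) <= (d1 + d2 - 2).+1)%N.
Proof.
move=> d1_gt0 d2_gt0 [f_sz g_sz]; have -> : (d1 + d2 - 2 = d1.-1 + d2.-1)%N by lia.
apply: leq_trans (msizeB_le _ _) _; rewrite geq_max.
by apply/andP; split; apply: msizeM_le_add; apply: msize_mderiv_le; rewrite prednK.
Qed.

Lemma coef_continuous_jac_sub b (r : P) :
  coef_continuous (fun f g => coef_sqnorm b (jac (f, g) - r)).
Proof.
move=> T H Q cH cQ; apply: continuous_coef_sqnorm.
apply: pcontinuousB; last exact: pcontinuous_cst.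
by apply: pcontinuousB; apply: pcontinuousM; exact: pcontinuous_mderiv.
Qed.

Lemma msize_Omega2 d1 d2 (F : P * P) : Omega2 d1 d2 F ->
  (msize F.1 <= (d1 + d2).+1)%N /\ (msize F.2 <= (d1 + d2).+1)%N.
Proof.
move=> [f_sz g_sz]; split; [apply: leq_trans f_sz _ | apply: leq_trans g_sz _];
  by rewrite ltnS ?leq_addr ?leq_addl.
Qed.

End Jacobian.

Theorem lemma3p3 (R : realType) (d1 d2 : nat) :
  (0 < d1)%N -> (0 < d2)%N ->
  open_in_Omega2 d1 d2
    (fun F : poly2 R[i] * poly2 R[i] =>
       Omega2 d1 d2 F /\ reduced (jac F) /\ deg_eq (d1 + d2 - 2) (jac F)).
Proof.
move=> d1_gt0 d2_gt0 [f g] OF [_ [J_red J_deg]].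
have [e e_gt0 He] := reduced_msize_nbhs J_deg J_red.
have [f_sz g_sz] := msize_Omega2 OF.
have [d d_gt0 Hd] := coef_continuous_at
  (coef_continuous_jac_sub (b := (d1 + d2 - 2).+1) (r := jac (f, g))) f_sz g_sz e_gt0.
exists d; split; first exact: d_gt0.
move=> [f' g'] OG close; split; first exact: OG.
have [f'_sz g'_sz] := msize_Omega2 OG.
apply: He; first exact: msize_jac.
have J0 : coef_sqnorm (d1 + d2 - 2).+1 (jac (f, g) - jac (f, g)) = 0.
  by rewrite subrr coef_sqnorm0.
have := Hd f' g' f'_sz g'_sz close.
by rewrite [X in `|_ - X|]J0 subr0 ger0_norm // coef_sqnorm_ge0.
Qed.
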